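(* Consider the disclosure model described in the context with a fixed, commonly known type $\theta\in\Theta$ (no information asymmetry). Let $\underline{\mathbf{e}}(\theta):=\min\{e\in E:\pi(\theta,e)\ge\pi(\theta,\bar e)\}$. An emission level $e^*\in E$ can be implemented (i.e., there exists $d\in\mathcal{D}$ such that $e^*$ is belief-compatible under $d$ and maximizes $\pi(\theta,\cdot)$ over $\tilde E_d$) if and only if $e^*\ge\underline{\mathbf{e}}(\theta)$. Moreover, any such $e^*$ is implemented by the binary disclosure policy \[d(e)=\begin{cases}e^*,& e\le e^*,\\ \bar e,& e>e^*.\end{cases}\]
   Context: Emissions lie in $E=[0,\bar e]\subset\mathbb{R}_+$ with $\bar e>0$; types lie in $\Theta=[\underline\theta,\bar\theta]$. The firm's profit is $\tilde\pi(\theta,e,\tilde e)$, where $e$ is the actual emission and $\tilde e\in E$ the emission perceived by the market; for each $\theta$ it is strictly increasing in $e$ and strictly decreasing in $\tilde e$. Standing assumptions: $\tilde\pi$ is continuous on $\Theta\times E\times E$ and $C^2$ on its interior; $\pi(\theta,e):=\tilde\pi(\theta,e,e)$ is strictly concave in $e$ for each $\theta$; and $\pi(\theta,0)<\pi(\theta,\bar e)$ for all $\theta$. A disclosure policy is a function $d:E\to E$ (the partition of $E$ into its level sets). An emission level $e$ is belief-compatible under $d$ if $e\ge e'$ for all $e'$ with $d(e')=d(e)$. Let $\tilde E_d$ be the set of belief-compatible levels. The firm of type $\theta$ effectively chooses $e\in\tilde E_d$ to maximize $\pi(\theta,e)$, because the market believes the firm chose the highest emission consistent with the disclosure. $\mathcal{D}$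 is the set of policies for which this maximum is attained for every type. *)

From Stdlib Require Import Reals.
From Coquelicot Require Import Coquelicot.
Open Scope R_scope.

Definition inE (ebar e : R) : Prop := 0 <= e <= ebar.

Definition inTheta (thl thh th : R) : Prop := thl <= th <= thh.

Definition pi_diag (tpi : R -> R -> R -> R) (th e : R) : R := tpi th e e.

(* A disclosure policy is a function d : E -> E (represented as R -> R
   mapping E into E; its values outside E are irrelevant). *)
Definition is_policy (ebar : R) (d : R -> R) : Prop :=
  forall e, inE ebar e -> inE ebar (d e).

Definition belief_compatible (ebar : R) (d : R -> R) (e : R) : Prop :=
  inE ebar e /\ forall e', inE ebar e' -> d e' = d e -> e' <= e.

Definition maximizes_on_Ed (tpi : R -> R -> R -> R) (ebar : R) (d : R -> R)
  (th e : R) : Prop :=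
  belief_compatible ebar d e /\
  forall e', belief_compatible ebar d e' -> pi_diag tpi th e' <= pi_diag tpi th e.

Definition in_D (tpi : R -> R -> R -> R) (thl thh ebar : R) (d : R -> R) : Prop :=
  is_policy ebar d /\
  forall th, inTheta thl thh th -> exists e, maximizes_on_Ed tpi ebar d th e.

Definition implements (tpi : R -> R -> R -> R) (thl thh ebar th : R)
  (d : R -> R) (estar : R) : Prop :=
  in_D tpi thl thh ebar d /\ maximizes_on_Ed tpi ebar d th estar.

Definition binary_policy (ebar estar : R) (e : R) : R :=
  if Rle_dec e estar then estar else ebar.

(* The standing assumptions (except C^2 smoothness). *)
Definition standing_assumptions (tpi : R -> R -> R -> R) (thl thh ebar : R) : Prop :=
  0 < ebar /\ thl <= thh /\
  (forall th e1 e2 et, inTheta thl thh th -> inE ebar e1 -> inE ebar e2 ->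
     inE ebar et -> e1 < e2 -> tpi th e1 et < tpi th e2 et) /\
  (forall th e et1 et2, inTheta thl thh th -> inE ebar e -> inE ebar et1 ->
     inE ebar et2 -> et1 < et2 -> tpi th e et2 < tpi th e et1) /\
  (forall p : R * R * R,
     inTheta thl thh (fst (fst p)) -> inE ebar (snd (fst p)) -> inE ebar (snd p) ->
     filterlim (fun q : R * R * R => tpi (fst (fst q)) (snd (fst q)) (snd q))
       (within (fun q : R * R * R => inTheta thl thh (fst (fst q)) /\
                  inE ebar (snd (fst q)) /\ inE ebar (snd q)) (locally p))
       (locally (tpi (fst (fst p)) (snd (fst p)) (snd p)))) /\
  (forall th x y t, inTheta thl thh th -> inE ebar x -> inE ebar y -> x <> y ->
     0 < t < 1 ->
     t * pi_diag tpi th x + (1 - t) * pi_diag tpi th y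
       < pi_diag tpi th (t * x + (1 - t) * y)) /\
  (forall th, inTheta thl thh th -> pi_diag tpi th 0 < pi_diag tpi th ebar).

Definition is_lower_bound_emission (tpi : R -> R -> R -> R) (ebar th el : R) : Prop :=
  (inE ebar el /\ pi_diag tpi th el >= pi_diag tpi th ebar) /\
  forall e, inE ebar e -> pi_diag tpi th e >= pi_diag tpi th ebar -> el <= e.

(* Without information asymmetry the firm can always fall back on the
   maximal emission [ebar], which is belief-compatible under every policy;
   so an implemented [estar] must satisfy pi(estar) >= pi(ebar), i.e.
   [estar >= el].  Conversely, under the binary policy the only
   belief-compatible levels are [estar] and [ebar], and concavity of pi on
   [[el, ebar]] gives pi(estar) >= min(pi(el), pi(ebar)) = pi(ebar). *)

From Stdlib Require Import Reals Lra.
From Coquelicot Require Import Coquelicot.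
Open Scope R_scope.

Lemma concave_chord_ge_right (f : R -> R) (x y z : R) :
  (forall t, 0 < t < 1 -> t * f x + (1 - t) * f y <= f (t * x + (1 - t) * y)) ->
  x <= z <= y -> f y <= f x -> f y <= f z.
Proof.
  intros Hchord [Hxz Hzy] Hfxy.
  destruct (Req_dec z x) as [-> | Hzx]; [exact Hfxy |].
  destruct (Req_dec z y) as [-> | Hzy']; [apply Rle_refl |].
  set (t := (y - z) / (y - x)).
  assert (Ht : 0 < t < 1).
  { unfold t; split.
    - apply Rdiv_lt_0_compat; lra.
    - apply Rmult_lt_reg_r with (y - x); [lra |].
      unfold Rdiv; rewrite Rmult_assoc, Rinv_l by lra; lra. }
  assert (Hz : t * x + (1 - t) * y = z) by (unfold t; field; lra).
  specialize (Hchord t Ht); rewrite Hz in Hchord.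
  assert (0 <= t * (f x - f y)) by (apply Rmult_le_pos; lra).
  lra.
Qed.

Lemma belief_compatible_ebar (ebar : R) (d : R -> R) :
  0 <= ebar -> belief_compatible ebar d ebar.
Proof. intros Hebar; split; [unfold inE; lra |]. intros e' [_ He'] _; exact He'. Qed.

Section BinaryPolicy.

Variables (ebar estar : R).
Hypothesis estar_in_E : inE ebar estar.

Let d := binary_policy ebar estar.

Lemma binary_policy_is_policy : is_policy ebar d.
Proof.
  intros e He; unfold d, binary_policy, inE in *.
  destruct (Rle_dec e estar); lra.
Qed.

Lemma belief_compatible_binary_policy (e : R) :
  belief_compatible ebar d e <-> e = estar \/ e = ebar.
Proof.
  destruct estar_in_E as [Hs0 Hs1].
  assert (Hd_estar : d estar = estar).
  { unfold d, binary_policy; destruct (Rle_dec estar estar); lra. }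
  split.
  - intros [[He0 He1] Hmax]; unfold d, binary_policy in Hmax.
    destruct (Rle_dec e estar) as [Hle | Hgt].
    + left; enough (estar <= e) by lra.
      apply Hmax; [split; lra |].
      destruct (Rle_dec estar estar); lra.
    + right; enough (ebar <= e) by lra.
      apply Hmax; [split; lra |].
      destruct (Rle_dec ebar estar); lra.
  - intros [-> | ->]; [| apply belief_compatible_ebar; lra].
    split; [exact estar_in_E |].
    intros e' [He'0 He'1]; rewrite Hd_estar; unfold d, binary_policy.
    destruct (Rle_dec e' estar); lra.
Qed.

Lemma maximizes_binary_policy (tpi : R -> R -> R -> R) (th e : R) :
  (e = estar \/ e = ebar) ->
  pi_diag tpi th estar <= pi_diag tpi th e ->
  pi_diag tpi th ebar <= pi_diag tpi th e ->
  maximizes_on_Ed tpi ebar d th e.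
Proof.
  intros He Hestar Hebar; split; [now apply belief_compatible_binary_policy |].
  intros e' Hbc; apply belief_compatible_binary_policy in Hbc.
  destruct Hbc as [-> | ->]; assumption.
Qed.

Lemma binary_policy_in_D (tpi : R -> R -> R -> R) (thl thh : R) :
  in_D tpi thl thh ebar d.
Proof.
  split; [exact binary_policy_is_policy |].
  intros th _.
  destruct (Rle_dec (pi_diag tpi th ebar) (pi_diag tpi th estar)) as [Hle | Hgt].
  - exists estar; apply maximizes_binary_policy; auto with real.
  - exists ebar; apply maximizes_binary_policy; auto with real.
Qed.

End BinaryPolicy.

Section LowerBoundEmission.

Variables (tpi : R -> R -> R -> R) (thl thh ebar th el : R).
Hypothesis assumptions : standing_assumptions tpi thl thh ebar.
Hypothesis th_in_Theta : inTheta thl thh th.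
Hypothesis el_lower_bound : is_lower_bound_emission tpi ebar th el.

Lemma implemented_ge_lower_bound (d : R -> R) (estar : R) :
  inE ebar estar -> implements tpi thl thh ebar th d estar -> el <= estar.
Proof.
  destruct assumptions as [Hebar _].
  intros Hs [_ [_ Hmax]].
  apply (proj2 el_lower_bound estar Hs).
  apply Rle_ge, Hmax, belief_compatible_ebar; lra.
Qed.

Lemma pi_ebar_le_above_lower_bound (estar : R) :
  inE ebar estar -> el <= estar -> pi_diag tpi th ebar <= pi_diag tpi th estar.
Proof.
  destruct assumptions as [Hebar [_ [_ [_ [_ [Hconcave _]]]]]].
  destruct el_lower_bound as [[Hel Hpi_el] _].
  intros Hs Hle.
  destruct (Req_dec el ebar) as [Heq | Hne].
  - replace estar with ebar by (destruct Hs; lra); apply Rle_refl.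
  - apply (concave_chord_ge_right (pi_diag tpi th) el ebar estar).
    + intros t Ht; apply Rlt_le, Hconcave; auto.
      unfold inE; lra.
    + destruct Hs; lra.
    + now apply Rge_le.
Qed.

End LowerBoundEmission.

Theorem proposition1 (tpi : R -> R -> R -> R) (thl thh ebar th el : R) :
  standing_assumptions tpi thl thh ebar ->
  inTheta thl thh th ->
  is_lower_bound_emission tpi ebar th el ->
  forall estar : R, inE ebar estar ->
    ((exists d : R -> R, implements tpi thl thh ebar th d estar) <-> el <= estar) /\
    (el <= estar -> implements tpi thl thh ebar th (binary_policy ebar estar) estar).
Proof.
  intros Hassum Hth Hel estar Hs.
  assert (Hbinary : el <= estar ->
            implements tpi thl thh ebar th (binary_policy ebar estar) estar).
  { intros Hle; split; [now apply binary_policy_in_D |].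
    apply maximizes_binary_policy; auto with real.
    now apply (pi_ebar_le_above_lower_bound tpi thl thh ebar th el). }
  split; [split | exact Hbinary].
  - intros [d Himpl].
    now apply (implemented_ge_lower_bound tpi thl thh ebar th el Hassum Hel d).
  - intros Hle; exists (binary_policy ebar estar); now apply Hbinary.
Qed.
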